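(* Consider the following symmetric two-player game between two responders, induced by two fixed offers $s_1,s_2\in[0,1]$ with $s_1\le s_2$, $s_2>0$ and $s_2<2s_1$. Each responder chooses proposer 1 with probability $p$ and proposer 2 with probability $1-p$, where $p\in[0,1]$. If responder 1 uses $p$ and responder 2 uses $q$, the expected payoff of responder 1 is $$\Pi(p,q)=s_1\,p\Big(1-q+\tfrac{q}{2}\Big)+s_2\,(1-p)\Big(q+\tfrac{1-q}{2}\Big),$$ and that of responder 2 is $\Pi(q,p)$. Then the strategy $$p_A=\frac{2s_1-s_2}{s_1+s_2}$$ is an evolutionarily stable strategy of this game, and it is the unique evolutionarily stable strategy of this game.
   Context: The game arises from the Multi-Proposer-Multi-Responder Ultimatum Game with two proposers and two responders: each proposer $i$ offers a share $s_i$ of a reward of size one to the responders; each responder selects one proposer (possibly at random); a proposer chosen by at least one responder receives $1-s_i$; if several responders choose the same proposer, exactly one of them, chosen uniformly at random, receives $s_i$ and the others receive $0$. A strategy $p$ of a symmetric two-player game with payoff $\Pi$ is evolutionarily stable if for every strategy $q\neq p$ either $\Pi(p,p)>\Pi(q,p)$, or $\Pi(p,p)=\Pi(q,p)$ and $\Pi(p,q)>\Pi(q,q)$. *)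

From Stdlib Require Import Reals.
Open Scope R_scope.

Definition Pi (s1 s2 p q : R) : R :=
  s1 * p * (1 - q + q / 2) + s2 * (1 - p) * (q + (1 - q) / 2).

Definition strategy (p : R) : Prop := 0 <= p <= 1.

Definition is_ESS (s1 s2 p : R) : Prop :=
  strategy p /\
  forall q, strategy q -> q <> p ->
    Pi s1 s2 p p > Pi s1 s2 q p \/
    (Pi s1 s2 p p = Pi s1 s2 q p /\ Pi s1 s2 p q > Pi s1 s2 q q).

(** The payoff gain from switching strategy against an opponent playing q is
    [Pi p q - Pi r q = (s1 + s2) / 2 * (p - r) * (pA - q)].  Against [pA]
    every strategy therefore earns the same, while
    [Pi pA q - Pi q q = (s1 + s2) / 2 * (pA - q)^2 > 0]: [pA] meets the second
    ESS condition against every mutant.  Conversely, against any [p <> pA] the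
    strategy [pA] does strictly better than [p] itself, so [p] is invaded. *)
From Stdlib Require Import Reals Lra.
Open Scope R_scope.

Section Responder_game.

Variables s1 s2 : R.
Hypothesis s1_add_s2_gt0 : 0 < s1 + s2.

Definition pA : R := (2 * s1 - s2) / (s1 + s2).

Lemma Pi_sub (p r q : R) :
  Pi s1 s2 p q - Pi s1 s2 r q = (s1 + s2) / 2 * (p - r) * (pA - q).
Proof. unfold Pi, pA; field; lra. Qed.

Lemma Pi_pA_indifferent (p r : R) : Pi s1 s2 p pA = Pi s1 s2 r pA.
Proof. apply Rminus_diag_uniq; rewrite Pi_sub; ring. Qed.

Lemma Pi_pA_gt (q : R) : q <> pA -> Pi s1 s2 pA q > Pi s1 s2 q q.
Proof.
  intros Hq; apply Rminus_gt; rewrite Pi_sub.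
  assert (0 < (pA - q) * (pA - q)) by (apply Rsqr_pos_lt; lra).
  replace ((s1 + s2) / 2 * (pA - q) * (pA - q))
    with ((s1 + s2) / 2 * ((pA - q) * (pA - q))) by ring.
  apply Rmult_lt_0_compat; lra.
Qed.

Lemma is_ESS_pA : strategy pA -> is_ESS s1 s2 pA.
Proof.
  intros HpA; split; [exact HpA|].
  intros q _ Hq; right; split.
  - apply Pi_pA_indifferent.
  - now apply Pi_pA_gt.
Qed.

Lemma is_ESS_eq_pA (p : R) : strategy pA -> is_ESS s1 s2 p -> p = pA.
Proof.
  intros HpA [_ Hstable].
  destruct (Req_dec p pA) as [E|E]; [exact E|].
  assert (Hinvade : Pi s1 s2 pA p > Pi s1 s2 p p) by now apply Pi_pA_gt.
  destruct (Hstable pA HpA (not_eq_sym E)) as [G | [G _]]; lra.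
Qed.

End Responder_game.

Lemma strategy_pA (s1 s2 : R) :
  s1 <= s2 -> s2 < 2 * s1 -> strategy (pA s1 s2).
Proof.
  intros Hs12 Hs21.
  assert (Hsum : 0 < s1 + s2) by lra.
  assert (HpA : pA s1 s2 * (s1 + s2) = 2 * s1 - s2)
    by (unfold pA; field; lra).
  split; apply Rmult_le_reg_r with (s1 + s2); lra.
Qed.

Theorem theorem1 (s1 s2 : R) :
  0 <= s1 <= 1 -> 0 <= s2 <= 1 -> s1 <= s2 -> 0 < s2 -> s2 < 2 * s1 ->
  is_ESS s1 s2 ((2 * s1 - s2) / (s1 + s2)) /\
  (forall p, is_ESS s1 s2 p -> p = (2 * s1 - s2) / (s1 + s2)).
Proof.
  (* [s1 <= s2 < 2 * s1] alone forces [0 < s1 + s2] and [0 <= pA <= 1]. *)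
  intros _ _ Hs12 _ Hs21.
  assert (Hsum : 0 < s1 + s2) by lra.
  assert (HpA : strategy (pA s1 s2)) by (now apply strategy_pA).
  split.
  - exact (is_ESS_pA s1 s2 Hsum HpA).
  - intros p Hp; exact (is_ESS_eq_pA s1 s2 Hsum p HpA Hp).
Qed.
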